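(* Let $f:X\to Y$ be a function and $(Y,\preceq)$ a WQO, and define $x\preceq_f x'$ iff $f(x)\preceq f(x')$. Then $I\subseteq X$ is an ideal of $(X,\preceq_f)$ if and only if $I=f^{-1}(J)$ for some ideal $J$ of $(Y,\preceq)$ such that $\downarrow_\preceq f(f^{-1}(J))=J$.
   Context: For a quasi-order $\preceq$ on $Y$, $\downarrow_\preceq S=\{y\mid\exists s\in S: y\preceq s\}$. An ideal of a WQO is a nonempty subset that is downward closed and directed (any two elements have a common upper bound in the set). *)

Definition quasi_order {Y : Type} (le : Y -> Y -> Prop) : Prop :=
  (forall y, le y y) /\ (forall x y z, le x y -> le y z -> le x z).

Definition wqo {Y : Type} (le : Y -> Y -> Prop) : Prop :=
  quasi_order le /\
  (forall s : nat -> Y, exists i j, i < j /\ le (s i) (s j)).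

Definition down {Y : Type} (le : Y -> Y -> Prop) (S : Y -> Prop) : Y -> Prop :=
  fun y => exists s, S s /\ le y s.

Definition downward_closed {Y : Type} (le : Y -> Y -> Prop) (S : Y -> Prop) : Prop :=
  forall x y, S y -> le x y -> S x.

Definition directed {Y : Type} (le : Y -> Y -> Prop) (S : Y -> Prop) : Prop :=
  forall x y, S x -> S y -> exists z, S z /\ le x z /\ le y z.

Definition ideal {Y : Type} (le : Y -> Y -> Prop) (S : Y -> Prop) : Prop :=
  (exists y, S y) /\ downward_closed le S /\ directed le S.

Definition induced {X Y : Type} (f : X -> Y) (le : Y -> Y -> Prop) : X -> X -> Prop :=
  fun x x' => le (f x) (f x').

Definition preimage {X Y : Type} (f : X -> Y) (J : Y -> Prop) : X -> Prop :=
  fun x => J (f x).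

Definition image {X Y : Type} (f : X -> Y) (I : X -> Prop) : Y -> Prop :=
  fun y => exists x, I x /\ f x = y.

Definition set_eq {T : Type} (A B : T -> Prop) : Prop := forall t, A t <-> B t.

(* The ideal [J] is forced
   to be [↓ f(I)]: since [I] is [≼_f]-downward closed, [I = f⁻¹(↓ f(I))],
   and directedness of [I] transfers to its image.  Conversely the condition
   [↓ f(f⁻¹(J)) = J] says that every element of [J] lies below some [f x] with
   [x ∈ f⁻¹(J)], which is what makes [f⁻¹(J)] nonempty and directed. *)

Lemma ideal_set_eq {T : Type} (R : T -> T -> Prop) (A B : T -> Prop) :
  set_eq A B -> ideal R B -> ideal R A.
Proof.
  intros HAB [[b Hb] [Hdc Hdir]]; repeat split.
  - exists b; apply HAB, Hb.
  - intros x y Hy Hxy; apply HAB; apply HAB in Hy; eauto.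
  - intros x y Hx Hy; apply HAB in Hx; apply HAB in Hy.
    destruct (Hdir x y Hx Hy) as [z [Hz Hxyz]].
    exists z; split; [apply HAB, Hz | exact Hxyz].
Qed.

Section InducedQuasiOrder.

Variables (X Y : Type) (f : X -> Y) (le : Y -> Y -> Prop).
Hypothesis le_refl : forall y, le y y.
Hypothesis le_trans : forall x y z, le x y -> le y z -> le x z.

Lemma ideal_down_image (I : X -> Prop) :
  ideal (induced f le) I -> ideal le (down le (image f I)).
Proof.
  intros [[x0 Hx0] [_ Hdir]]; repeat split.
  - exists (f x0), (f x0); split; [exists x0; auto | apply le_refl].
  - intros a b [s [Hs Hbs]] Hab; exists s; split; eauto.
  - intros a b [_ [[x1 [H1 <-]] Ha]] [_ [[x2 [H2 <-]] Hb]].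
    destruct (Hdir x1 x2 H1 H2) as [z [Hz [H1z H2z]]].
    exists (f z); repeat split; eauto.
    exists (f z); split; [exists z; auto | apply le_refl].
Qed.

Lemma preimage_down_image (I : X -> Prop) :
  downward_closed (induced f le) I -> set_eq I (preimage f (down le (image f I))).
Proof.
  intros Hdc x; split.
  - intros Hx; exists (f x); split; [exists x; auto | apply le_refl].
  - intros [_ [[x' [Hx' <-]] Hle]]; exact (Hdc x x' Hx' Hle).
Qed.

Lemma down_image_set_eq (A B : X -> Prop) :
  set_eq A B -> set_eq (down le (image f A)) (down le (image f B)).
Proof.
  intros HAB y; split; intros [_ [[x [Hx <-]] Hle]];
    exists (f x); split; auto; exists x; split; auto; apply HAB, Hx.
Qed.

Lemma ideal_preimage (J : Y -> Prop) :
  ideal le J -> set_eq (down le (image f (preimage f J))) J ->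
  ideal (induced f le) (preimage f J).
Proof.
  intros [[y0 Hy0] [Hdc Hdir]] Hcover; repeat split.
  - apply Hcover in Hy0; destruct Hy0 as [_ [[x [Hx _]] _]]; exists x; exact Hx.
  - intros a b Hb Hab; exact (Hdc _ _ Hb Hab).
  - intros a b Ha Hb.
    destruct (Hdir _ _ Ha Hb) as [z [Hz [Haz Hbz]]].
    apply Hcover in Hz; destruct Hz as [_ [[x [Hx <-]] Hzx]].
    exists x; split; [exact Hx | split; eapply le_trans; eauto].
Qed.

End InducedQuasiOrder.

Theorem mainTheorem8 (X Y : Type) (f : X -> Y) (le : Y -> Y -> Prop)
  (Hwqo : wqo le) (I : X -> Prop) :
  ideal (induced f le) I <->
  exists J : Y -> Prop,
    ideal le J /\ set_eq I (preimage f J) /\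
    set_eq (down le (image f (preimage f J))) J.
Proof.
  destruct Hwqo as [[le_refl le_trans] _].
  split.
  - intros HI.
    pose proof (preimage_down_image X Y f le le_refl I (proj1 (proj2 HI))) as HIJ.
    exists (down le (image f I)); split; [|split].
    + exact (ideal_down_image X Y f le le_refl le_trans I HI).
    + exact HIJ.
    + intros y; apply iff_sym, (down_image_set_eq X Y f le _ _ HIJ).
  - intros [J [HJ [HIJ Hcover]]].
    apply (ideal_set_eq _ _ _ HIJ).
    exact (ideal_preimage X Y f le le_trans J HJ Hcover).
Qed.
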